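(* Let $t\ge 0$ be an integer and $p$ an integer with $1\le p\le\left\lfloor\frac{t+5}{4}\right\rfloor$; set $m=t+3-2p$. Let $r_1<r_2<\cdots<r_p$ be positive real numbers and $R=\{r_1,\dots,r_p\}$. For integers $k,j$ let $$b_{k,j}=\left(r_k\cos\left(\tfrac{2j+k}{m}\pi\right),\ r_k\sin\left(\tfrac{2j+k}{m}\pi\right)\right),$$ and let $\mathcal B=\{b_{k,j}:1\le j\le m,\ 1\le k\le p\}$. Define $w:\mathcal B\to\mathbb{R}$ by $w(b_{k,j})=\frac{1}{r_1^m}$ if $k=1$, and $$w(b_{k,j})=(-1)^k\frac{1}{r_k^m}\prod_{2\le l\le p,\ l\ne k}\frac{r_1^2-r_l^2}{r_k^2-r_l^2}\quad\text{if }2\le k\le p.$$ Then $w$ takes only positive values, $\mathcal B$ is antipodal when $t$ is odd, and $(\mathcal B,w)$ is a tight Euclidean $t$-design in $\mathbb{R}^2$ with norm spectrum $R$.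
   Context: For $r>0$, $S_r^{n-1}\subset\mathbb{R}^n$ is the sphere of radius $r$ centered at the origin and $\overline{f}_{S_r^{n-1}}$ the average of $f$ over it with respect to surface measure. For a finite $\mathcal X\subset\mathbb{R}^n\setminus\{\mathbf 0\}$ with norm spectrum $R=\{\|\mathbf x\|:\mathbf x\in\mathcal X\}$ and weight function $w:\mathcal X\to\mathbb{R}_{>0}$ with $W_r=\sum_{\|\mathbf x\|=r}w(\mathbf x)$, $(\mathcal X,w)$ is a Euclidean $t$-design if $\sum_{r\in R}W_r\overline{f}_{S_r^{n-1}}=\sum_{\mathbf x\in\mathcal X}w(\mathbf x)f(\mathbf x)$ for all real polynomials $f$ of total degree $\le t$. A set is antipodal if $\mathbf x\in\mathcal X\Rightarrow-\mathbf x\in\mathcal X$ (for weighted sets also $w(-\mathbf x)=w(\mathbf x)$). With $d(s)=\binom{s+n-1}{n-1}$ (and $d(s)=0$ for $s<0$), $N_k=d\left(\lfloor t/2\rfloor+2-2k\right)+d\left(\lfloor (t-1)/2\rfloor+2-2k\right)$ and $N(n,p,t)=\sum_{k=1}^pN_k$. A Euclidean $t$-design in $\mathbb{R}^n$ whose norm spectrum has $p$ elements is called tight if it has exactly $N(n,p,t)$ points. *)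

From Stdlib Require Import Reals Lra Lia ZArith Arith List.
From Coquelicot Require Import Coquelicot.
Open Scope R_scope.

Definition pt := (R * R)%type.

Definition norm2 (x : pt) : R := sqrt (fst x ^ 2 + snd x ^ 2).

Definition lsum (X : list pt) (g : pt -> R) : R :=
  fold_right Rplus 0 (map g X).

Definition is_poly_le (t : nat) (f : pt -> R) : Prop :=
  exists c : nat -> nat -> R, forall x y : R,
    f (x, y) = sum_f_R0 (fun a => sum_f_R0 (fun b => c a b * x ^ a * y ^ b) (t - a)) t.

(* Average of f over the circle S_r^1 w.r.t. surface (arc-length) measure:
   (1/(2 pi r)) * int_0^{2pi} f(r cos th, r sin th) r d th. *)
Definition circle_avg (r : R) (f : pt -> R) : R :=
  / (2 * PI) * RInt (fun th => f (r * cos th, r * sin th)) 0 (2 * PI).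

Definition norm_spectrum (X : list pt) : list R :=
  nodup Req_EM_T (map norm2 X).

Definition Wr (X : list pt) (w : pt -> R) (r : R) : R :=
  lsum (filter (fun x => if Req_EM_T (norm2 x) r then true else false) X) w.

Definition weighted_set (X : list pt) (w : pt -> R) : Prop :=
  NoDup X /\ (forall x, In x X -> x <> (0, 0)) /\ (forall x, In x X -> 0 < w x).

Definition euclidean_design (X : list pt) (w : pt -> R) (t : nat) : Prop :=
  weighted_set X w /\
  forall f : pt -> R, is_poly_le t f ->
    fold_right Rplus 0 (map (fun r => Wr X w r * circle_avg r f) (norm_spectrum X))
    = lsum X (fun x => w x * f x).

Definition antipodal (X : list pt) (w : pt -> R) : Prop :=
  forall x, In x X -> In (- fst x, - snd x) X /\ w (- fst x, - snd x) = w x.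

Fixpoint binom (n k : nat) : nat :=
  match n, k with
  | _, O => 1%nat
  | O, S _ => 0%nat
  | S n', S k' => (binom n' k' + binom n' k)%nat
  end.

Definition dZ (n : nat) (s : Z) : nat :=
  if (s <? 0)%Z then 0%nat else binom (Z.to_nat s + n - 1) (n - 1).

Definition N_k (n t k : nat) : nat :=
  (dZ n (Z.of_nat t / 2 + 2 - 2 * Z.of_nat k)%Z
   + dZ n ((Z.of_nat t - 1) / 2 + 2 - 2 * Z.of_nat k)%Z)%nat.

Definition N_npt (n p t : nat) : nat :=
  fold_right Nat.add 0%nat (map (N_k n t) (seq 1 p)).

Definition tight_design (X : list pt) (w : pt -> R) (t : nat) : Prop :=
  euclidean_design X w t /\
  length X = N_npt 2 (length (norm_spectrum X)) t.

Definition bpt (r : nat -> R) (m k j : nat) : pt :=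
  (r k * cos (INR (2 * j + k) / INR m * PI), r k * sin (INR (2 * j + k) / INR m * PI)).

Definition Bset (r : nat -> R) (p m : nat) : list pt :=
  flat_map (fun k => map (fun j => bpt r m k j) (seq 1 m)) (seq 1 p).

Definition weight_formula (r : nat -> R) (p m k : nat) : R :=
  if Nat.eqb k 1 then / (r 1%nat ^ m)
  else (-1) ^ k * / (r k ^ m) *
       fold_right Rmult 1
         (map (fun l => (r 1%nat ^ 2 - r l ^ 2) / (r k ^ 2 - r l ^ 2))
              (filter (fun l => negb (Nat.eqb l k)) (seq 2 (p - 1)))).

From Stdlib Require Import Reals Lra Lia ZArith List Permutation.
From Coquelicot Require Import Coquelicot.
Import ListNotations.
Open Scope R_scope.

(* In polar coordinates a monomial x^a y^b becomes rho^(a+b) cos^a th sin^b th, a trigonometric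
   polynomial whose frequencies are at most a + b and congruent to it mod 2.  Averaging over a
   circle keeps its constant term; summing over the m points of angles (2j + k) pi / m keeps the
   constant term plus (-1)^k times the coefficient of cos (m th), because all frequencies are
   below 2m.  The design identity therefore reduces to
   sum_k w_k (-1)^k r_k^(m + 2q) = 0 for q <= p - 2, which is the Lagrange interpolation of
   x^q at x = r_1^2 from the nodes r_2^2, ..., r_p^2.  The same Lagrange coefficients give the
   sign of the weights, and m p = N(2, p, t) is a direct count. *)

Definition rsum {A} (l : list A) (F : A -> R) : R := fold_right Rplus 0 (map F l).
Definition rprod {A} (l : list A) (F : A -> R) : R := fold_right Rmult 1 (map F l).

Section FiniteSums.
Context {A : Type}.

Lemma rsum_app (l1 l2 : list A) F : rsum (l1 ++ l2) F = rsum l1 F + rsum l2 F.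
Proof. induction l1 as [|a l1 IH]; unfold rsum in *; simpl; [ring|rewrite IH; ring]. Qed.

Lemma rsum_ext (l : list A) F G : (forall x, In x l -> F x = G x) -> rsum l F = rsum l G.
Proof. intros H; unfold rsum; f_equal; apply map_ext_in, H. Qed.

Lemma rsum_plus (l : list A) F G : rsum l (fun x => F x + G x) = rsum l F + rsum l G.
Proof. induction l as [|a l IH]; unfold rsum in *; simpl; [ring|rewrite IH; ring]. Qed.

Lemma rsum_scal (l : list A) c F : rsum l (fun x => c * F x) = c * rsum l F.
Proof. induction l as [|a l IH]; unfold rsum in *; simpl; [ring|rewrite IH; ring]. Qed.

Lemma rsum_const (l : list A) c : rsum l (fun _ => c) = INR (length l) * c.
Proof.
  induction l as [|a l IH]; unfold rsum in *; simpl length; [simpl; ring|].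
  rewrite S_INR; simpl; rewrite IH; ring.
Qed.

Lemma rsum_eq0 (l : list A) F : (forall x, In x l -> F x = 0) -> rsum l F = 0.
Proof. intros H; rewrite (rsum_ext _ _ (fun _ => 0)), rsum_const by exact H; ring. Qed.

Lemma rsum_single (l : list A) F a :
  NoDup l -> In a l -> (forall x, In x l -> x <> a -> F x = 0) -> rsum l F = F a.
Proof.
  induction l as [|b l IH]; intros Hnd Ha H; [destruct Ha|]. inversion Hnd; subst.
  change (rsum (b :: l) F) with (F b + rsum l F). destruct Ha as [<-|Ha].
  - rewrite rsum_eq0; [ring|]. intros x Hx; apply H; [right; auto|intros ->; auto].
  - rewrite H by (now left || (intros ->; auto)).
    rewrite IH; auto; [ring|]. intros x Hx; apply H; right; exact Hx.
Qed.

Lemma rsum_perm (l l' : list A) F : Permutation l l' -> rsum l F = rsum l' F.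
Proof. unfold rsum; induction 1; simpl; try congruence; ring. Qed.

Lemma rsum_flat_map {B} (l : list B) (g : B -> list A) F :
  rsum (flat_map g l) F = rsum l (fun b => rsum (g b) F).
Proof. induction l as [|b l IH]; simpl; [reflexivity|]. rewrite rsum_app, IH; reflexivity. Qed.

Lemma rsum_filter (P : A -> bool) l F :
  rsum (filter P l) F = rsum l (fun x => if P x then F x else 0).
Proof.
  induction l as [|a l IH]; unfold rsum in *; simpl; auto.
  destruct (P a); simpl; rewrite IH; ring.
Qed.

Lemma rsum_map {B} (g : B -> A) l F : rsum (map g l) F = rsum l (fun x => F (g x)).
Proof. unfold rsum. rewrite map_map. reflexivity. Qed.

Lemma rsum_sum_f_R0 (l : list A) (G : A -> nat -> R) N :
  rsum l (fun x => sum_f_R0 (G x) N) = sum_f_R0 (fun i => rsum l (fun x => G x i)) N.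
Proof. induction N as [|N IH]; simpl; [reflexivity|]. rewrite rsum_plus, IH; reflexivity. Qed.

Lemma rprod_app (l1 l2 : list A) F : rprod (l1 ++ l2) F = rprod l1 F * rprod l2 F.
Proof. induction l1 as [|a l1 IH]; unfold rprod in *; simpl; [ring|rewrite IH; ring]. Qed.

Lemma rprod_eq0 (l : list A) F a : In a l -> F a = 0 -> rprod l F = 0.
Proof.
  induction l as [|b l IH]; unfold rprod in *; simpl; [tauto|].
  intros [<-|Ha] E; [rewrite E|rewrite IH]; auto; ring.
Qed.

Lemma rprod_eq1 (l : list A) F : (forall x, In x l -> F x = 1) -> rprod l F = 1.
Proof.
  induction l as [|a l IH]; unfold rprod in *; simpl; auto.
  intros H; rewrite H, IH; auto; ring.
Qed.

Lemma rprod_pos (l : list A) F : (forall x, In x l -> 0 < F x) -> 0 < rprod l F.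
Proof.
  induction l as [|a l IH]; unfold rprod in *; simpl; intros H; [lra|].
  apply Rmult_lt_0_compat; auto.
Qed.

Lemma rprod_neg (l : list A) F : (forall x, In x l -> F x < 0) -> 0 < (-1) ^ length l * rprod l F.
Proof.
  induction l as [|a l IH]; unfold rprod in *; simpl; intros H; [lra|].
  specialize (IH (fun x Hx => H x (or_intror Hx))). specialize (H a (or_introl eq_refl)).
  replace (-1 * (-1) ^ length l * (F a * fold_right Rmult 1 (map F l)))
    with ((-1) ^ length l * fold_right Rmult 1 (map F l) * - F a) by ring.
  apply Rmult_lt_0_compat; lra.
Qed.

End FiniteSums.

Lemma rsum_comm {A B} (l1 : list A) (l2 : list B) F :
  rsum l1 (fun x => rsum l2 (fun y => F x y)) = rsum l2 (fun y => rsum l1 (fun x => F x y)).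
Proof.
  induction l1 as [|a l1 IH]; unfold rsum at 1 3; simpl.
  - symmetry; apply rsum_eq0; reflexivity.
  - fold (rsum l1 (fun x => rsum l2 (fun y => F x y))). rewrite IH, <- rsum_plus. reflexivity.
Qed.

Lemma rsum_telescope (G : nat -> R) N : rsum (seq 1 N) (fun j => G j - G (j - 1)%nat) = G N - G 0%nat.
Proof.
  induction N as [|N IH]; [unfold rsum; simpl; ring|].
  rewrite seq_S, rsum_app, IH. unfold rsum; simpl. rewrite Nat.sub_0_r; ring.
Qed.

Definition trig_term (e : nat * R * R) (x : R) : R :=
  let '(n, a, b) := e in a * cos (INR n * x) + b * sin (INR n * x).

Definition trig_eval (L : list (nat * R * R)) (x : R) : R := rsum L (fun e => trig_term e x).

Definition trig_coef (n : nat) (L : list (nat * R * R)) : R :=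
  rsum L (fun e => if Nat.eqb (fst (fst e)) n then snd (fst e) else 0).

Definition freqs_le_parity (d : nat) (L : list (nat * R * R)) : Prop :=
  forall e, In e L -> exists q, d = (fst (fst e) + 2 * q)%nat.

(* Product-to-sum formulas: cos x and sin x times a term of frequency n. *)
Definition cos_mul_term (e : nat * R * R) : list (nat * R * R) :=
  match e with
  | (O, a, b) => [(1%nat, a, 0)]
  | (S n, a, b) => [(S (S n), a / 2, b / 2); (n, a / 2, b / 2)]
  end.

Definition sin_mul_term (e : nat * R * R) : list (nat * R * R) :=
  match e with
  | (O, a, b) => [(1%nat, 0, a)]
  | (S n, a, b) => [(S (S n), - b / 2, a / 2); (n, b / 2, - a / 2)]
  end.

Definition trig_monomial (a b : nat) : list (nat * R * R) :=
  Nat.iter a (flat_map cos_mul_term) (Nat.iter b (flat_map sin_mul_term) [(0%nat, 1, 0)]).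

Lemma trig_eval_flat_map (g : nat * R * R -> list (nat * R * R)) c L x :
  (forall e, trig_eval (g e) x = c * trig_term e x) ->
  trig_eval (flat_map g L) x = c * trig_eval L x.
Proof.
  intros Hg. unfold trig_eval. rewrite rsum_flat_map, <- rsum_scal.
  apply rsum_ext; intros e _; apply Hg.
Qed.

Lemma cos_sin_neighbours n x :
  cos (INR (S (S n)) * x) = cos (INR (S n) * x) * cos x - sin (INR (S n) * x) * sin x /\
  sin (INR (S (S n)) * x) = sin (INR (S n) * x) * cos x + cos (INR (S n) * x) * sin x /\
  cos (INR n * x) = cos (INR (S n) * x) * cos x + sin (INR (S n) * x) * sin x /\
  sin (INR n * x) = sin (INR (S n) * x) * cos x - cos (INR (S n) * x) * sin x.
Proof.
  replace (INR (S (S n)) * x) with (INR (S n) * x + x) by (rewrite (S_INR (S n)); ring).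
  replace (INR n * x) with (INR (S n) * x - x) by (rewrite (S_INR n); ring).
  rewrite cos_plus, sin_plus, cos_minus, sin_minus. repeat split; ring.
Qed.

Lemma trig_eval_cos_mul_term e x : trig_eval (cos_mul_term e) x = cos x * trig_term e x.
Proof.
  destruct e as [[[|n] a] b]; unfold trig_eval, rsum;
    cbn [cos_mul_term sin_mul_term map fold_right trig_term].
  - rewrite ?Rmult_0_l, ?Rmult_1_l, ?cos_0, ?sin_0. ring.
  - destruct (cos_sin_neighbours n x) as (H1 & H2 & H3 & H4).
    rewrite H1, H2, H3, H4. field.
Qed.

Lemma trig_eval_sin_mul_term e x : trig_eval (sin_mul_term e) x = sin x * trig_term e x.
Proof.
  destruct e as [[[|n] a] b]; unfold trig_eval, rsum;
    cbn [cos_mul_term sin_mul_term map fold_right trig_term].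
  - rewrite ?Rmult_0_l, ?Rmult_1_l, ?cos_0, ?sin_0. ring.
  - destruct (cos_sin_neighbours n x) as (H1 & H2 & H3 & H4).
    rewrite H1, H2, H3, H4. pose proof (sin2_cos2 x) as Hs; unfold Rsqr in Hs.
    replace (sin x * sin x) with (1 - cos x * cos x) by lra. field.
Qed.

Lemma trig_eval_monomial a b x : trig_eval (trig_monomial a b) x = cos x ^ a * sin x ^ b.
Proof.
  unfold trig_monomial. induction a as [|a IH]; simpl Nat.iter.
  - induction b as [|b IH]; simpl Nat.iter.
    + unfold trig_eval, rsum; simpl. rewrite Rmult_0_l, cos_0, sin_0. ring.
    + rewrite (trig_eval_flat_map sin_mul_term (sin x) _ _ (fun e => trig_eval_sin_mul_term e x)), IH.
      simpl; ring.
  - rewrite (trig_eval_flat_map cos_mul_term (cos x) _ _ (fun e => trig_eval_cos_mul_term e x)), IH.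
    simpl; ring.
Qed.

Lemma freqs_flat_map (g : nat * R * R -> list (nat * R * R)) d L :
  (forall e e', In e' (g e) -> exists q, S (fst (fst e)) = (fst (fst e') + 2 * q)%nat) ->
  freqs_le_parity d L -> freqs_le_parity (S d) (flat_map g L).
Proof.
  intros Hg HL e' He'. apply in_flat_map in He'. destruct He' as [e [He He']].
  destruct (HL e He) as [q Hq]. destruct (Hg e e' He') as [q' Hq']. exists (q + q')%nat. lia.
Qed.

Lemma freqs_monomial a b : freqs_le_parity (a + b) (trig_monomial a b).
Proof.
  assert (Hcos : forall e e', In e' (cos_mul_term e) ->
                   exists q, S (fst (fst e)) = (fst (fst e') + 2 * q)%nat).
  { intros [[[|n] x] y] e' He'; simpl in He'; intuition subst; simpl;
      first [exists 0%nat; lia | exists 1%nat; lia]. }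
  assert (Hsin : forall e e', In e' (sin_mul_term e) ->
                   exists q, S (fst (fst e)) = (fst (fst e') + 2 * q)%nat).
  { intros [[[|n] x] y] e' He'; simpl in He'; intuition subst; simpl;
      first [exists 0%nat; lia | exists 1%nat; lia]. }
  unfold trig_monomial. induction a as [|a IH]; simpl Nat.iter.
  - induction b as [|b IH]; simpl Nat.iter.
    + intros e [<-|[]]. exists 0%nat; reflexivity.
    + apply freqs_flat_map; assumption.
  - apply freqs_flat_map; assumption.
Qed.

Lemma trig_coef_nonzero n L : trig_coef n L <> 0 -> exists e, In e L /\ fst (fst e) = n.
Proof.
  induction L as [|e L IH]; unfold trig_coef, rsum; simpl; [lra|].
  destruct (Nat.eqb_spec (fst (fst e)) n) as [E|_]; [eauto|].
  intros H. destruct IH as [e' [He' E']]; [unfold trig_coef, rsum; lra|eauto].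
Qed.

Lemma is_RInt_const_R (a b c : R) : is_RInt (fun _ => c) a b ((b - a) * c).
Proof. exact (is_RInt_const a b c). Qed.

Lemma is_RInt_cos_sin_period (c a b : R) :
  c <> 0 -> sin (c * (2 * PI)) = 0 -> cos (c * (2 * PI)) = 1 ->
  is_RInt (fun x => a * cos (c * x) + b * sin (c * x)) 0 (2 * PI) 0.
Proof.
  intros Hc Hs Hco.
  set (F := fun x => (a * sin (c * x) - b * cos (c * x)) / c).
  set (f := fun x => a * cos (c * x) + b * sin (c * x)).
  assert (HF : forall x, Rmin 0 (2 * PI) <= x <= Rmax 0 (2 * PI) -> is_derive F x (f x)).
  { intros x _. unfold F, f. auto_derive; [exact I|]. field. exact Hc. }
  assert (Hf : forall x, Rmin 0 (2 * PI) <= x <= Rmax 0 (2 * PI) -> continuous f x).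
  { intros x _. apply (ex_derive_continuous f). unfold f. auto_derive. exact I. }
  pose proof (is_RInt_derive F f 0 (2 * PI) HF Hf) as HI.
  match type of HI with is_RInt _ _ _ ?l => replace l with 0 in HI; [exact HI|] end.
  unfold F; cbv beta. rewrite Hs, Hco, (Rmult_0_r c), sin_0, cos_0.
  unfold minus, plus, opp; simpl. field. exact Hc.
Qed.

Lemma is_RInt_trig_term e :
  is_RInt (trig_term e) 0 (2 * PI) (2 * PI * (if Nat.eqb (fst (fst e)) 0 then snd (fst e) else 0)).
Proof.
  destruct e as [[[|n] a] b]; cbn [fst snd Nat.eqb].
  - apply (is_RInt_ext (fun _ => a)).
    + intros x _. unfold trig_term. now rewrite Rmult_0_l, cos_0, sin_0, Rmult_1_r, Rmult_0_r, Rplus_0_r.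
    + replace (2 * PI * a) with ((2 * PI - 0) * a) by ring. apply is_RInt_const_R.
  - rewrite Rmult_0_r. apply (is_RInt_cos_sin_period (INR (S n))).
    + apply not_0_INR; lia.
    + replace (INR (S n) * (2 * PI)) with (0 + 2 * INR (S n) * PI) by ring.
      rewrite sin_period; apply sin_0.
    + replace (INR (S n) * (2 * PI)) with (0 + 2 * INR (S n) * PI) by ring.
      rewrite cos_period; apply cos_0.
Qed.

Lemma is_RInt_trig_eval L : is_RInt (trig_eval L) 0 (2 * PI) (2 * PI * trig_coef 0 L).
Proof.
  induction L as [|e L IH].
  - apply (is_RInt_ext (fun _ => 0)); [reflexivity|].
    replace (2 * PI * trig_coef 0 []) with ((2 * PI - 0) * 0) by (unfold trig_coef, rsum; simpl; ring).
    apply is_RInt_const_R.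
  - replace (2 * PI * trig_coef 0 (e :: L))
      with (plus (2 * PI * (if Nat.eqb (fst (fst e)) 0 then snd (fst e) else 0))
                 (2 * PI * trig_coef 0 L))
      by (unfold plus, trig_coef, rsum; simpl; ring).
    apply (is_RInt_plus _ _ _ _ _ _ (is_RInt_trig_term e) IH).
Qed.

Definition angle (m k j : nat) : R := INR (2 * j + k) / INR m * PI.

Lemma cos_nat_PI k : cos (INR k * PI) = (-1) ^ k.
Proof.
  induction k as [|k IH]; [simpl; rewrite Rmult_0_l; apply cos_0|].
  rewrite S_INR, Rmult_plus_distr_r, Rmult_1_l, neg_cos, IH. simpl; ring.
Qed.

Lemma sin_nat_PI k : sin (INR k * PI) = 0.
Proof.
  induction k as [|k IH]; [simpl; rewrite Rmult_0_l; apply sin_0|].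
  rewrite S_INR, Rmult_plus_distr_r, Rmult_1_l, neg_sin, IH. ring.
Qed.

Lemma mul_angle n m k j : (1 <= m)%nat ->
  INR n * angle m k j = INR n * INR k * PI / INR m + INR j * (2 * PI * INR n / INR m).
Proof.
  intros Hm. unfold angle. rewrite plus_INR, mult_INR.
  assert (INR m <> 0) by (apply not_0_INR; lia). simpl (INR 2). field; auto.
Qed.

Lemma sin_PI_mul_nonzero q : 0 < q < 2 -> q <> 1 -> sin (PI * q) <> 0.
Proof.
  intros Hq Hq1. pose proof PI_RGT_0.
  destruct (Rtotal_order q 1) as [Hl|[He|Hg]]; [| contradiction |].
  - apply Rgt_not_eq, sin_gt_0; nra.
  - apply Rlt_not_eq, sin_lt_0; nra.
Qed.

Lemma rsum_cos_sin_angle n m k : (1 <= n)%nat -> (n < 2 * m)%nat -> n <> m ->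
  rsum (seq 1 m) (fun j => cos (INR n * angle m k j)) = 0 /\
  rsum (seq 1 m) (fun j => sin (INR n * angle m k j)) = 0.
Proof.
  intros H1 H2 H3.
  set (A := INR n * INR k * PI / INR m). set (h := 2 * PI * INR n / INR m).
  assert (Hs : 2 * sin (h / 2) <> 0).
  { assert (Hm : 0 < INR m) by (apply lt_0_INR; lia).
    set (q := INR n / INR m). assert (Hqm : q * INR m = INR n) by (unfold q; field; lra).
    assert (0 < INR n < 2 * INR m)
      by (split; [apply lt_0_INR|rewrite <- (mult_INR 2); apply lt_INR]; lia).
    replace (h / 2) with (PI * q) by (unfold h, q; field; lra).
    enough (sin (PI * q) <> 0) by lra.
    apply sin_PI_mul_nonzero; [split; nra|].
    intros Hq1. apply H3, INR_eq. rewrite <- Hqm, Hq1. ring. }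
  assert (Hmh : INR m * h = 2 * INR n * PI) by (unfold h; field; apply not_0_INR; lia).
  assert (Hj : forall j, In j (seq 1 m) -> INR n * angle m k j = A + INR j * h
                                       /\ INR (j - 1) = INR j - 1).
  { intros j Hj. apply in_seq in Hj. split; [apply mul_angle; lia|].
    rewrite minus_INR by lia. reflexivity. }
  (* 2 sin(h/2) cos(A + j h) and 2 sin(h/2) sin(A + j h) telescope. *)
  split; apply (Rmult_eq_reg_l (2 * sin (h / 2))); auto; rewrite Rmult_0_r, <- rsum_scal.
  - pose (G j := sin (A + INR j * h + h / 2)).
    rewrite (rsum_ext _ _ (fun j => G j - G (j - 1)%nat)), rsum_telescope.
    + unfold G. replace (A + INR m * h + h / 2) with (A + INR 0 * h + h / 2 + 2 * INR n * PI)
        by (rewrite Hmh; simpl; ring).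
      rewrite sin_period. ring.
    + intros j Hjm. unfold G. destruct (Hj j Hjm) as [-> ->].
      replace (A + (INR j - 1) * h + h / 2) with (A + INR j * h - h / 2) by lra.
      rewrite sin_plus, sin_minus. ring.
  - pose (G j := - cos (A + INR j * h + h / 2)).
    rewrite (rsum_ext _ _ (fun j => G j - G (j - 1)%nat)), rsum_telescope.
    + unfold G. replace (A + INR m * h + h / 2) with (A + INR 0 * h + h / 2 + 2 * INR n * PI)
        by (rewrite Hmh; simpl; ring).
      rewrite cos_period. ring.
    + intros j Hjm. unfold G. destruct (Hj j Hjm) as [-> ->].
      replace (A + (INR j - 1) * h + h / 2) with (A + INR j * h - h / 2) by lra.
      rewrite cos_plus, cos_minus. ring.
Qed.

Lemma mul_angle_self m k j : (1 <= m)%nat -> INR m * angle m k j = INR k * PI + 2 * INR j * PI.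
Proof.
  intros Hm. unfold angle. rewrite plus_INR, mult_INR.
  assert (INR m <> 0) by (apply not_0_INR; lia). simpl (INR 2). field; auto.
Qed.

Lemma rsum_trig_term_angle e m k : (1 <= m)%nat -> (fst (fst e) < 2 * m)%nat ->
  rsum (seq 1 m) (fun j => trig_term e (angle m k j)) =
  INR m * (if Nat.eqb (fst (fst e)) 0 then snd (fst e) else 0) +
  INR m * (-1) ^ k * (if Nat.eqb (fst (fst e)) m then snd (fst e) else 0).
Proof.
  destruct e as [[n a] b]; cbn [fst snd]. intros Hm Hn. unfold trig_term.
  rewrite rsum_plus, !rsum_scal.
  destruct (Nat.eqb_spec n 0) as [->|H0]; [|destruct (Nat.eqb_spec n m) as [->|Hnm]].
  - destruct (Nat.eqb_spec 0 m); [lia|].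
    rewrite (rsum_ext _ _ (fun _ => 1)), (rsum_eq0 _ (fun j => sin _)), rsum_const, length_seq.
    + ring.
    + intros; simpl; rewrite Rmult_0_l; apply sin_0.
    + intros; simpl; rewrite Rmult_0_l; apply cos_0.
  - rewrite (rsum_ext _ _ (fun _ => (-1) ^ k)), (rsum_eq0 _ (fun j => sin _)), rsum_const, length_seq.
    + ring.
    + intros j _. rewrite mul_angle_self, sin_period by exact Hm. apply sin_nat_PI.
    + intros j _. rewrite mul_angle_self, cos_period by exact Hm. apply cos_nat_PI.
  - destruct (rsum_cos_sin_angle n m k) as [-> ->]; try lia. ring.
Qed.

Lemma rsum_trig_eval_angle L m k : (1 <= m)%nat -> (forall e, In e L -> (fst (fst e) < 2 * m)%nat) ->
  rsum (seq 1 m) (fun j => trig_eval L (angle m k j))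
  = INR m * trig_coef 0 L + INR m * (-1) ^ k * trig_coef m L.
Proof.
  intros Hm HL. unfold trig_eval, trig_coef. rewrite rsum_comm, <- !rsum_scal, <- rsum_plus.
  apply rsum_ext. intros e He. apply rsum_trig_term_angle; auto.
Qed.

Definition sum_deg_le (t : nat) (F : nat -> nat -> R) : R :=
  sum_f_R0 (fun a => sum_f_R0 (fun b => F a b) (t - a)) t.

Lemma sum_deg_le_ext t F G :
  (forall a b, (a + b <= t)%nat -> F a b = G a b) -> sum_deg_le t F = sum_deg_le t G.
Proof. intros H. apply sum_eq; intros a Ha. apply sum_eq; intros b Hb. apply H; lia. Qed.

Lemma sum_deg_le_scal t x F : x * sum_deg_le t F = sum_deg_le t (fun a b => x * F a b).
Proof.
  unfold sum_deg_le. rewrite scal_sum. apply sum_eq; intros a _.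
  rewrite Rmult_comm, scal_sum. apply sum_eq; intros; ring.
Qed.

Lemma sum_deg_le_plus t F G : sum_deg_le t (fun a b => F a b + G a b) = sum_deg_le t F + sum_deg_le t G.
Proof. unfold sum_deg_le. rewrite <- sum_plus. apply sum_eq; intros. apply sum_plus. Qed.

Lemma sum_deg_le_eq0 t F : (forall a b, (a + b <= t)%nat -> F a b = 0) -> sum_deg_le t F = 0.
Proof. intros H. apply sum_eq_R0; intros a Ha. apply sum_eq_R0; intros b Hb. apply H; lia. Qed.

Lemma rsum_sum_deg_le {A} (l : list A) t (F : A -> nat -> nat -> R) :
  rsum l (fun x => sum_deg_le t (F x)) = sum_deg_le t (fun a b => rsum l (fun x => F x a b)).
Proof. unfold sum_deg_le. rewrite rsum_sum_f_R0. apply sum_eq; intros. apply rsum_sum_f_R0. Qed.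

Lemma is_RInt_sum_f_R0 (F : nat -> R -> R) v a b N :
  (forall i, (i <= N)%nat -> is_RInt (F i) a b (v i)) ->
  is_RInt (fun x => sum_f_R0 (fun i => F i x) N) a b (sum_f_R0 v N).
Proof.
  induction N as [|N IH]; intros H; [apply H; lia|].
  apply (is_RInt_plus (fun x => sum_f_R0 (fun i => F i x) N) (F (S N)));
    [apply IH; intros|]; apply H; lia.
Qed.

Lemma is_RInt_sum_deg_le t (F : nat -> nat -> R -> R) v a b :
  (forall i j, (i + j <= t)%nat -> is_RInt (F i j) a b (v i j)) ->
  is_RInt (fun x => sum_deg_le t (fun i j => F i j x)) a b (sum_deg_le t v).
Proof.
  intros H. apply is_RInt_sum_f_R0. intros i Hi.
  apply (is_RInt_sum_f_R0 (F i)). intros j Hj. apply H; lia.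
Qed.

Lemma monomial_polar (c rho x : R) a b :
  c * (rho * cos x) ^ a * (rho * sin x) ^ b = c * rho ^ (a + b) * trig_eval (trig_monomial a b) x.
Proof. rewrite trig_eval_monomial, !Rpow_mult_distr, pow_add. ring. Qed.

Lemma circle_avg_poly t (c : nat -> nat -> R) f rho :
  (forall x y, f (x, y) = sum_deg_le t (fun a b => c a b * x ^ a * y ^ b)) ->
  circle_avg rho f = sum_deg_le t (fun a b => c a b * rho ^ (a + b) * trig_coef 0 (trig_monomial a b)).
Proof.
  intros Hf. unfold circle_avg.
  set (g a b th := c a b * rho ^ (a + b) * trig_eval (trig_monomial a b) th).
  assert (HI : is_RInt (fun th => f (rho * cos th, rho * sin th)) 0 (2 * PI)
     (sum_deg_le t (fun a b => c a b * rho ^ (a + b) * (2 * PI * trig_coef 0 (trig_monomial a b))))).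
  { apply (is_RInt_ext (fun th => sum_deg_le t (fun a b => g a b th))).
    - intros th _. rewrite Hf. apply sum_deg_le_ext. intros a b _. symmetry. apply monomial_polar.
    - apply is_RInt_sum_deg_le. intros a b _.
      apply (is_RInt_scal (trig_eval (trig_monomial a b))), is_RInt_trig_eval. }
  rewrite (is_RInt_unique _ _ _ _ HI), sum_deg_le_scal. apply sum_deg_le_ext. intros a b _.
  field. apply PI_neq0.
Qed.

Lemma rsum_poly_angle t (c : nat -> nat -> R) f rho m k :
  (1 <= m)%nat -> (t < 2 * m)%nat ->
  (forall x y, f (x, y) = sum_deg_le t (fun a b => c a b * x ^ a * y ^ b)) ->
  rsum (seq 1 m) (fun j => f (rho * cos (angle m k j), rho * sin (angle m k j))) =
  sum_deg_le t (fun a b => c a b * rho ^ (a + b) *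
    (INR m * trig_coef 0 (trig_monomial a b) + INR m * (-1) ^ k * trig_coef m (trig_monomial a b))).
Proof.
  intros Hm Ht Hf.
  rewrite (rsum_ext _ _ (fun j => sum_deg_le t
             (fun a b => c a b * rho ^ (a + b) * trig_eval (trig_monomial a b) (angle m k j)))).
  - rewrite rsum_sum_deg_le. apply sum_deg_le_ext. intros a b Hab.
    rewrite rsum_scal, rsum_trig_eval_angle; auto.
    intros e He. destruct (freqs_monomial a b e He) as [q Hq]. lia.
  - intros j _. rewrite Hf. apply sum_deg_le_ext. intros a b _. apply monomial_polar.
Qed.

Fixpoint poly_deg_le (d : nat) (P : R -> R) : Prop :=
  match d with
  | O => exists c, forall x, P x = c
  | S d' => exists c Q, poly_deg_le d' Q /\ forall x, P x = c + x * Q x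
  end.

Lemma poly_deg_le_ext d P P' : (forall x, P x = P' x) -> poly_deg_le d P -> poly_deg_le d P'.
Proof.
  destruct d; simpl; intros E.
  - intros [c H]; exists c; intros; rewrite <- E; auto.
  - intros [c [Q [HQ H]]]; exists c, Q; split; auto; intros; rewrite <- E; auto.
Qed.

Lemma poly_deg_le_const d c : poly_deg_le d (fun _ => c).
Proof.
  revert c; induction d; intros c; simpl; [exists c; auto|].
  exists c, (fun _ => 0). split; auto. intros x; ring.
Qed.

Lemma poly_deg_le_plus d P Q : poly_deg_le d P -> poly_deg_le d Q -> poly_deg_le d (fun x => P x + Q x).
Proof.
  revert P Q; induction d; simpl; intros P Q.
  - intros [c H] [c' H']. exists (c + c'). intros; rewrite H, H'; auto.
  - intros [c [P1 [H1 E1]]] [c' [Q1 [H2 E2]]]. exists (c + c'), (fun x => P1 x + Q1 x).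
    split; auto. intros; rewrite E1, E2; ring.
Qed.

Lemma poly_deg_le_scal d a P : poly_deg_le d P -> poly_deg_le d (fun x => a * P x).
Proof.
  revert P; induction d; simpl; intros P.
  - intros [c H]. exists (a * c). intros; rewrite H; auto.
  - intros [c [P1 [H1 E1]]]. exists (a * c), (fun x => a * P1 x).
    split; auto. intros; rewrite E1; ring.
Qed.

Lemma poly_deg_le_mono d d' P : (d <= d')%nat -> poly_deg_le d P -> poly_deg_le d' P.
Proof.
  induction 1 as [|d' _ IH]; auto. intros HP. specialize (IH HP). clear HP. revert P IH.
  induction d' as [|d' IHd]; intros P.
  - intros [c H]. exists c, (fun _ => 0). split; [exists 0; auto|]. intros; rewrite H; ring.
  - intros [c [P1 [H1 E1]]]. exists c, P1. split; auto.
Qed.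

Lemma poly_deg_le_mul_linear d a Q : poly_deg_le d Q -> poly_deg_le (S d) (fun x => (x - a) * Q x).
Proof.
  destruct d; intros HQ.
  - destruct HQ as [c H]. exists (- a * c), (fun _ => c). split; [exists c; auto|].
    intros; rewrite H; ring.
  - destruct HQ as [c [Q1 [H1 E1]]]. exists (- a * c), (fun x => Q x + - a * Q1 x). split.
    + apply poly_deg_le_plus; [exists c, Q1; auto|].
      apply poly_deg_le_scal, (poly_deg_le_mono d); auto.
    + intros x. rewrite E1. ring.
Qed.

Lemma poly_deg_le_pow i : poly_deg_le i (fun x => x ^ i).
Proof. induction i; [exists 1; auto|]. exists 0, (fun x => x ^ i). split; auto. intros; simpl; ring. Qed.

Lemma poly_deg_le_factor d P y : poly_deg_le (S d) P ->
  exists Q, poly_deg_le d Q /\ forall x, P x - P y = (x - y) * Q x.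
Proof.
  revert P; induction d; intros P [c [Q0 [H0 E0]]].
  - destruct H0 as [q Hq]. exists Q0. split; [exists q; auto|]. intros x. rewrite !E0, !Hq. ring.
  - destruct (IHd Q0 H0) as [R1 [HR ER]].
    exists (fun x => Q0 x + y * R1 x). split.
    + apply poly_deg_le_plus; auto. apply poly_deg_le_scal, (poly_deg_le_mono d); auto.
    + intros x. rewrite !E0.
      replace (c + x * Q0 x - (c + y * Q0 y)) with ((x - y) * Q0 x + y * (Q0 x - Q0 y)) by ring.
      rewrite ER. ring.
Qed.

Lemma poly_deg_le_roots d P ys : poly_deg_le d P -> length ys = S d -> NoDup ys ->
  (forall y, In y ys -> P y = 0) -> forall x, P x = 0.
Proof.
  revert P ys; induction d; intros P ys HP Hl Hnd Hr x; (destruct ys as [|y0 ys]; [discriminate|]).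
  - destruct HP as [c Hc]. rewrite Hc, <- (Hc y0). apply Hr; left; auto.
  - destruct (poly_deg_le_factor d P y0 HP) as [Q [HQ EQ]]. inversion Hnd; subst.
    assert (HQ0 : forall x, Q x = 0).
    { apply (IHd Q ys HQ); auto. intros y Hy.
      assert (E := EQ y). rewrite (Hr y (or_intror Hy)), (Hr y0 (or_introl eq_refl)) in E.
      assert (y - y0 <> 0) by (intro; apply H1; replace y0 with y by lra; auto).
      apply Rmult_eq_reg_l with (y - y0); auto. lra. }
    assert (E := EQ x). rewrite HQ0, (Hr y0 (or_introl eq_refl)) in E. lra.
Qed.

Lemma poly_deg_le_rprod {A} (l : list A) (u v : A -> R) :
  poly_deg_le (length l) (fun x => rprod l (fun i => (x - u i) / v i)).
Proof.
  induction l as [|i l IH]; [exists 1; auto|].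
  apply (poly_deg_le_ext (S (length l))
           (fun x => / v i * ((x - u i) * rprod l (fun i => (x - u i) / v i)))).
  - intros x; unfold rprod; simpl; unfold Rdiv; ring.
  - apply poly_deg_le_scal, poly_deg_le_mul_linear, IH.
Qed.

Lemma poly_deg_le_rsum {A} d (l : list A) (F : A -> R -> R) :
  (forall i, In i l -> poly_deg_le d (F i)) -> poly_deg_le d (fun x => rsum l (fun i => F i x)).
Proof.
  induction l as [|i l IH]; intros H; unfold rsum; simpl; [apply poly_deg_le_const|].
  apply poly_deg_le_plus; [apply H; left; auto|]. apply IH. intros; apply H; right; auto.
Qed.

Definition lagrange_basis (l : list nat) (y : nat -> R) (k : nat) (x : R) : R :=
  rprod (filter (fun i => negb (Nat.eqb i k)) l) (fun i => (x - y i) / (y k - y i)).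

Lemma length_filter_neq k l : In k l -> (length (filter (fun i => negb (Nat.eqb i k)) l) < length l)%nat.
Proof.
  induction l as [|a l IH]; simpl; [tauto|]. intros [<-|H].
  - rewrite Nat.eqb_refl. simpl. pose proof (filter_length_le (fun i => negb (i =? a)) l). lia.
  - destruct (negb (a =? k)); simpl; specialize (IH H); lia.
Qed.

Lemma lagrange_interpolation_pow (l : list nat) (y : nat -> R) (x : R) n :
  NoDup l -> (forall k i, In k l -> In i l -> k <> i -> y k <> y i) -> (n < length l)%nat ->
  rsum l (fun k => y k ^ n * lagrange_basis l y k x) = x ^ n.
Proof.
  intros Hnd Hy Hn.
  set (P := fun x => rsum l (fun k => y k ^ n * lagrange_basis l y k x) + -1 * x ^ n).
  enough (P x = 0) by (unfold P in *; lra).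
  apply (poly_deg_le_roots (length l - 1) P (map y l)).
  - apply poly_deg_le_plus.
    + apply poly_deg_le_rsum. intros k Hk. apply poly_deg_le_scal.
      eapply poly_deg_le_mono; [|apply poly_deg_le_rprod].
      pose proof (length_filter_neq k l Hk); lia.
    + apply poly_deg_le_scal, (poly_deg_le_mono n); [lia|apply poly_deg_le_pow].
  - rewrite length_map. lia.
  - apply FinFun.Injective_map_NoDup_in; auto.
    intros k i Hk Hi E. destruct (Nat.eq_dec k i); auto. exfalso; apply (Hy k i); auto.
  - intros z Hz. apply in_map_iff in Hz. destruct Hz as [j [<- Hj]]. unfold P.
    rewrite (rsum_single _ _ j); auto.
    + unfold lagrange_basis. rewrite rprod_eq1; [ring|]. intros i Hi.
      apply filter_In in Hi. destruct Hi as [Hi Hij]. apply Bool.negb_true_iff, Nat.eqb_neq in Hij.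
      field. intro. apply (Hy j i); auto. lra.
    + intros k Hk Hkj. unfold lagrange_basis. rewrite (rprod_eq0 _ _ j); [ring| |].
      * apply filter_In. split; auto. apply Bool.negb_true_iff, Nat.eqb_neq; auto.
      * unfold Rminus; rewrite Rplus_opp_r. unfold Rdiv; ring.
Qed.

Lemma bpt_angle r m k j : bpt r m k j = (r k * cos (angle m k j), r k * sin (angle m k j)).
Proof. reflexivity. Qed.

Lemma sin_pow2_cos_pow2 x : sin x ^ 2 + cos x ^ 2 = 1.
Proof. rewrite <- (sin2_cos2 x). unfold Rsqr; ring. Qed.

Lemma norm2_bpt r m k j : 0 < r k -> norm2 (bpt r m k j) = r k.
Proof.
  intros H. rewrite bpt_angle. unfold norm2; cbn [fst snd].
  replace ((r k * cos (angle m k j)) ^ 2 + (r k * sin (angle m k j)) ^ 2)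
    with (r k ^ 2 * (sin (angle m k j) ^ 2 + cos (angle m k j) ^ 2)) by ring.
  rewrite sin_pow2_cos_pow2, Rmult_1_r. apply sqrt_pow2. lra.
Qed.

Lemma sin_cos_full_turn d : 0 < d < 2 * PI -> sin d = 0 -> cos d <> 1.
Proof.
  intros Hd Hs.
  destruct (Rtotal_order d PI) as [Hl|[->|Hg]].
  - pose proof (sin_gt_0 d (proj1 Hd) Hl). lra.
  - rewrite cos_PI. lra.
  - pose proof (sin_lt_0 d Hg (proj2 Hd)). lra.
Qed.

Lemma bpt_inj r m k j j' : 0 < r k -> (1 <= j <= m)%nat -> (1 <= j' <= m)%nat ->
  bpt r m k j = bpt r m k j' -> j = j'.
Proof.
  intros Hr Hj Hj' E. rewrite !bpt_angle in E. injection E as E1 E2.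
  apply Rmult_eq_reg_l in E1, E2; try lra.
  assert (key : forall a b, (1 <= a)%nat -> (a < b <= m)%nat ->
     cos (angle m k a) = cos (angle m k b) -> sin (angle m k a) = sin (angle m k b) -> False).
  { intros a b Ha Hab Ec Es.
    assert (Hd : angle m k b - angle m k a = 2 * PI * (INR (b - a) / INR m)).
    { unfold angle. rewrite !plus_INR, !mult_INR, minus_INR by lia. simpl (INR 2).
      field. apply not_0_INR; lia. }
    assert (Hq : 0 < INR (b - a) / INR m < 1).
    { assert (0 < INR (b - a)) by (apply lt_0_INR; lia).
      assert (INR (b - a) < INR m) by (apply lt_INR; lia).
      split; [apply Rdiv_lt_0_compat; lra|].
      apply Rmult_lt_reg_r with (INR m); [lra|]. unfold Rdiv. rewrite Rmult_assoc, Rinv_l; lra. }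
    apply (sin_cos_full_turn (angle m k b - angle m k a)).
    - rewrite Hd. pose proof PI_RGT_0. nra.
    - rewrite sin_minus, Ec, Es. ring.
    - rewrite cos_minus, Ec, Es. pose proof (sin_pow2_cos_pow2 (angle m k b)). lra. }
  destruct (Nat.lt_total j j') as [H|[H|H]]; auto; exfalso.
  - apply (key j j'); auto; lia.
  - apply (key j' j); auto; lia.
Qed.

Lemma angle_add_half m h k j : m = (2 * h)%nat -> (1 <= h)%nat ->
  angle m k (j + h) = angle m k j + PI.
Proof.
  intros -> Hh. unfold angle. rewrite !plus_INR, !mult_INR, plus_INR. simpl (INR 2).
  field. apply not_0_INR; lia.
Qed.

Lemma in_Bset r p m x :
  In x (Bset r p m) <-> exists k j, (1 <= k <= p)%nat /\ (1 <= j <= m)%nat /\ x = bpt r m k j.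
Proof.
  unfold Bset. rewrite in_flat_map. split.
  - intros [k [Hk Hx]]. apply in_map_iff in Hx. destruct Hx as [j [<- Hj]].
    apply in_seq in Hk, Hj. exists k, j. repeat split; lia.
  - intros [k [j [Hk [Hj ->]]]]. exists k. split; [apply in_seq; lia|].
    apply in_map_iff. exists j. split; auto. apply in_seq; lia.
Qed.

Lemma length_Bset r p m : length (Bset r p m) = (p * m)%nat.
Proof.
  unfold Bset. rewrite (flat_map_constant_length (c := m)), length_seq; [reflexivity|].
  intros k _. rewrite length_map, length_seq. reflexivity.
Qed.

Lemma rsum_Bset r p m F :
  rsum (Bset r p m) F = rsum (seq 1 p) (fun k => rsum (seq 1 m) (fun j => F (bpt r m k j))).
Proof.
  unfold Bset. rewrite rsum_flat_map. apply rsum_ext. intros k _. apply rsum_map.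
Qed.

Lemma antipodal_Bset r p m h w (u : nat -> R) : m = (2 * h)%nat -> (1 <= h)%nat ->
  (forall k j, (1 <= k <= p)%nat -> (1 <= j <= m)%nat -> w (bpt r m k j) = u k) ->
  antipodal (Bset r p m) w.
Proof.
  intros Hmh Hh Hw x Hx. apply in_Bset in Hx. destruct Hx as [k [j [Hk [Hj ->]]]].
  assert (Hneg : forall j', angle m k j' = angle m k j + PI \/ angle m k j = angle m k j' + PI ->
            bpt r m k j' = (- fst (bpt r m k j), - snd (bpt r m k j))).
  { intros j' [E|E]; rewrite !bpt_angle; cbn [fst snd]; rewrite E, ?neg_cos, ?neg_sin; f_equal; ring. }
  destruct (Nat.le_gt_cases j h) as [Hjh|Hjh].
  - rewrite <- (Hneg (j + h)%nat) by (left; apply angle_add_half; auto). split.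
    + apply in_Bset. exists k, (j + h)%nat. repeat split; auto; lia.
    + rewrite !Hw; auto; lia.
  - rewrite <- (Hneg (j - h)%nat).
    + split.
      * apply in_Bset. exists k, (j - h)%nat. repeat split; auto; lia.
      * rewrite !Hw; auto; lia.
    + right. replace j with (j - h + h)%nat at 1 by lia. apply angle_add_half; auto.
Qed.

Lemma bpt_nonzero r m k j : 0 < r k -> bpt r m k j <> (0, 0).
Proof.
  intros Hr E. apply (f_equal norm2) in E. rewrite norm2_bpt in E by exact Hr.
  unfold norm2 in E; cbn [fst snd] in E. rewrite pow_i, Rplus_0_r, sqrt_0 in E by lia. lra.
Qed.

Lemma weight_formula_lagrange r p m k : k <> 1%nat ->
  weight_formula r p m k
  = (-1) ^ k * / r k ^ m * lagrange_basis (seq 2 (p - 1)) (fun l => r l ^ 2) k (r 1%nat ^ 2).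
Proof. intros Hk. unfold weight_formula. destruct (Nat.eqb_spec k 1); [contradiction|reflexivity]. Qed.

Lemma filter_seq_neq a n k : (a <= k < a + n)%nat ->
  filter (fun l => negb (Nat.eqb l k)) (seq a n) = seq a (k - a) ++ seq (S k) (a + n - S k).
Proof.
  intros Hk. replace (seq a n) with (seq a (k - a) ++ k :: seq (S k) (a + n - S k)).
  - rewrite filter_app. cbn [filter]. rewrite Nat.eqb_refl. cbn [negb].
    rewrite !forallb_filter_id; [reflexivity| |];
      apply forallb_forall; intros l Hl; apply in_seq in Hl; apply Bool.negb_true_iff, Nat.eqb_neq; lia.
  - transitivity (seq a (k - a + S (a + n - S k))); [|f_equal; lia].
    rewrite seq_app. cbn [seq]. replace (a + (k - a))%nat with k by lia. reflexivity.
Qed.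

Definition radial_weight (r : nat -> R) (p m : nat) (x : pt) : R :=
  rsum (seq 1 p) (fun k => if Req_EM_T (norm2 x) (r k) then weight_formula r p m k else 0).

Section Configuration.

Variables (p : nat) (r : nat -> R).
Hypothesis r_pos : forall k, (1 <= k <= p)%nat -> 0 < r k.
Hypothesis r_incr : forall k l, (1 <= k)%nat -> (k < l)%nat -> (l <= p)%nat -> r k < r l.

Lemma r_sq_lt k l : (1 <= k)%nat -> (k < l)%nat -> (l <= p)%nat -> r k ^ 2 < r l ^ 2.
Proof. intros Hk Hkl Hl. pose proof (r_pos k ltac:(lia)). pose proof (r_incr k l Hk Hkl Hl). nra. Qed.

Lemma r_sq_inj k l : (1 <= k <= p)%nat -> (1 <= l <= p)%nat -> r k ^ 2 = r l ^ 2 -> k = l.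
Proof.
  intros Hk Hl E. destruct (Nat.lt_total k l) as [H|[H|H]]; auto.
  - pose proof (r_sq_lt k l ltac:(lia) H ltac:(lia)). lra.
  - pose proof (r_sq_lt l k ltac:(lia) H ltac:(lia)). lra.
Qed.

Lemma r_inj k l : (1 <= k <= p)%nat -> (1 <= l <= p)%nat -> r k = r l -> k = l.
Proof. intros Hk Hl E. apply r_sq_inj; auto. rewrite E. reflexivity. Qed.

Lemma NoDup_Bset m : NoDup (Bset r p m).
Proof.
  assert (G : forall s n, (1 <= s)%nat -> (s + n <= S p)%nat ->
            NoDup (flat_map (fun k => map (fun j => bpt r m k j) (seq 1 m)) (seq s n))).
  { intros s n; revert s; induction n as [|n IH]; intros s Hs Hsn; simpl; [constructor|].
    apply NoDup_app.
    - apply FinFun.Injective_map_NoDup_in; [|apply seq_NoDup].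
      intros a b Ha Hb E. apply in_seq in Ha, Hb. apply (bpt_inj r m s); auto; try lia. apply r_pos; lia.
    - apply IH; lia.
    - intros x Hx Hx'. apply in_map_iff in Hx. destruct Hx as [j [<- Hj]].
      apply in_flat_map in Hx'. destruct Hx' as [k [Hk Hx']]. apply in_seq in Hk.
      apply in_map_iff in Hx'. destruct Hx' as [j' [E Hj']].
      apply (f_equal norm2) in E. rewrite !norm2_bpt in E by (apply r_pos; lia).
      apply r_inj in E; lia. }
  apply G; lia.
Qed.

Lemma norm_spectrum_Bset m s : (1 <= m)%nat ->
  In s (norm_spectrum (Bset r p m)) <-> exists k, (1 <= k <= p)%nat /\ s = r k.
Proof.
  intros Hm. unfold norm_spectrum. rewrite nodup_In, in_map_iff. split.
  - intros [x [<- Hx]]. apply in_Bset in Hx. destruct Hx as [k [j [Hk [Hj ->]]]].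
    exists k. split; auto. apply norm2_bpt, r_pos; auto.
  - intros [k [Hk ->]]. exists (bpt r m k 1%nat). split; [apply norm2_bpt, r_pos; auto|].
    apply in_Bset. exists k, 1%nat. repeat split; auto; lia.
Qed.

Lemma norm_spectrum_Bset_perm m : (1 <= m)%nat ->
  Permutation (norm_spectrum (Bset r p m)) (map r (seq 1 p)).
Proof.
  intros Hm. apply NoDup_Permutation.
  - apply NoDup_nodup.
  - apply FinFun.Injective_map_NoDup_in; [|apply seq_NoDup].
    intros a b Ha Hb E. apply in_seq in Ha, Hb. apply r_inj; auto; lia.
  - intros s. rewrite norm_spectrum_Bset, in_map_iff by exact Hm. split.
    + intros [k [Hk ->]]. exists k. split; auto. apply in_seq; lia.
    + intros [k [<- Hk]]. apply in_seq in Hk. exists k. split; auto; lia.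
Qed.

Lemma weight_formula_pos m k : (1 <= k <= p)%nat -> 0 < weight_formula r p m k.
Proof.
  intros Hk. assert (Hrk : 0 < r k) by auto.
  destruct (Nat.eq_dec k 1) as [->|Hk1].
  - unfold weight_formula. rewrite Nat.eqb_refl. apply Rinv_0_lt_compat, pow_lt, Hrk.
  - rewrite weight_formula_lagrange by exact Hk1. unfold lagrange_basis.
    rewrite filter_seq_neq, rprod_app by lia.
    set (F := fun i => (r 1%nat ^ 2 - r i ^ 2) / (r k ^ 2 - r i ^ 2)).
    (* The k - 2 factors with 1 < i < k are negative, the others positive. *)
    set (low := rprod (seq 2 (k - 2)) F). set (high := rprod (seq (S k) _) F).
    assert (Hlow : 0 < (-1) ^ (k - 2) * low).
    { pose proof (rprod_neg (seq 2 (k - 2)) F) as Hneg. rewrite length_seq in Hneg.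
      apply Hneg. intros i Hi. apply in_seq in Hi.
      pose proof (r_sq_lt 1 i ltac:(lia) ltac:(lia) ltac:(lia)).
      pose proof (r_sq_lt i k ltac:(lia) ltac:(lia) ltac:(lia)).
      apply Rdiv_neg_pos; lra. }
    assert (Hhigh : 0 < high).
    { apply rprod_pos. intros i Hi. apply in_seq in Hi.
      pose proof (r_sq_lt 1 i ltac:(lia) ltac:(lia) ltac:(lia)).
      pose proof (r_sq_lt k i ltac:(lia) ltac:(lia) ltac:(lia)).
      apply Rdiv_neg_neg; lra. }
    assert (Hsign : (-1) ^ k = (-1) ^ (k - 2))
      by (replace k with (k - 2 + 2)%nat at 1 by lia; rewrite pow_add; simpl; ring).
    assert (0 < / r k ^ m) by (apply Rinv_0_lt_compat, pow_lt, Hrk).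
    rewrite Hsign. replace ((-1) ^ (k - 2) * / r k ^ m * (low * high))
      with (/ r k ^ m * ((-1) ^ (k - 2) * low) * high) by ring.
    apply Rmult_lt_0_compat; [apply Rmult_lt_0_compat|]; assumption.
Qed.

Lemma alternating_moment_vanishes m q : (q + 2 <= p)%nat ->
  rsum (seq 1 p) (fun k => weight_formula r p m k * ((-1) ^ k * r k ^ (m + 2 * q))) = 0.
Proof.
  intros Hq. assert (Hr1 : 0 < r 1%nat) by (apply r_pos; lia).
  assert (Hseq : seq 1 p = 1%nat :: seq 2 (p - 1))
    by (replace p with (S (p - 1)) at 1 by lia; reflexivity).
  rewrite Hseq.
  change (rsum (1%nat :: ?l) ?F) with (F 1%nat + rsum l F).
  (* The weights of the outer circles are Lagrange coefficients at the nodes r_k^2,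
     evaluated at r_1^2. *)
  rewrite (rsum_ext _ _ (fun k =>
             (r k ^ 2) ^ q * lagrange_basis (seq 2 (p - 1)) (fun l => r l ^ 2) k (r 1%nat ^ 2))).
  - rewrite lagrange_interpolation_pow.
    + unfold weight_formula. rewrite Nat.eqb_refl, pow_add, <- pow_mult. field. apply pow_nonzero; lra.
    + apply seq_NoDup.
    + intros k l Hk Hl Hkl E. apply in_seq in Hk, Hl. apply Hkl, r_sq_inj; auto; lia.
    + rewrite length_seq. lia.
  - intros k Hk. apply in_seq in Hk. rewrite weight_formula_lagrange by lia.
    assert (Hsign : (-1) ^ k * (-1) ^ k = 1) by (rewrite <- Rpow_mult_distr, <- (pow1 k); f_equal; ring).
    assert (Hrk : r k ^ m <> 0) by (apply pow_nonzero; pose proof (r_pos k ltac:(lia)); lra).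
    rewrite pow_add, pow_mult.
    transitivity (((-1) ^ k * (-1) ^ k) * (r k ^ m * / r k ^ m) *
      ((r k ^ 2) ^ q * lagrange_basis (seq 2 (p - 1)) (fun l => r l ^ 2) k (r 1%nat ^ 2))); [ring|].
    rewrite Hsign, Rinv_r by exact Hrk. ring.
Qed.

Lemma radial_weight_bpt m k j :
  (1 <= k <= p)%nat -> radial_weight r p m (bpt r m k j) = weight_formula r p m k.
Proof.
  intros Hk. unfold radial_weight. rewrite norm2_bpt by auto.
  rewrite (rsum_single _ _ k).
  - destruct (Req_EM_T (r k) (r k)); [reflexivity|contradiction].
  - apply seq_NoDup.
  - apply in_seq; lia.
  - intros k' Hk' Hne. apply in_seq in Hk'. destruct (Req_EM_T (r k) (r k')) as [E|]; [|reflexivity].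
    apply r_inj in E; lia.
Qed.

Section Weights.

Variables (m : nat) (w : pt -> R).
Hypothesis w_bpt :
  forall k j, (1 <= k <= p)%nat -> (1 <= j <= m)%nat -> w (bpt r m k j) = weight_formula r p m k.

Lemma Wr_Bset k : (1 <= k <= p)%nat -> Wr (Bset r p m) w (r k) = INR m * weight_formula r p m k.
Proof.
  intros Hk. unfold Wr. change (lsum ?l ?g) with (rsum l g).
  rewrite rsum_filter, rsum_Bset, (rsum_single _ _ k), (rsum_ext _ _ (fun _ => weight_formula r p m k)).
  - rewrite rsum_const, length_seq. reflexivity.
  - intros j Hj. apply in_seq in Hj. rewrite norm2_bpt by auto.
    destruct (Req_EM_T (r k) (r k)) as [_|]; [apply w_bpt; auto; lia|contradiction].
  - apply seq_NoDup.
  - apply in_seq; lia.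
  - intros k' Hk' Hne. apply in_seq in Hk'. apply rsum_eq0. intros j _.
    rewrite norm2_bpt by (apply r_pos; lia).
    destruct (Req_EM_T (r k') (r k)) as [E|]; [|reflexivity].
    apply r_inj in E; lia.
Qed.

Lemma design_equation_Bset t f : (1 <= m)%nat -> (t < 2 * m)%nat -> (t + 3 <= m + 2 * p)%nat ->
  is_poly_le t f ->
  fold_right Rplus 0 (map (fun s => Wr (Bset r p m) w s * circle_avg s f) (norm_spectrum (Bset r p m)))
  = lsum (Bset r p m) (fun x => w x * f x).
Proof.
  intros Hm Ht Htp [c Hf].
  change (fold_right Rplus 0 (map ?F ?l)) with (rsum l F).
  rewrite (rsum_perm _ _ _ (norm_spectrum_Bset_perm m Hm)).
  rewrite rsum_map, rsum_Bset.
  set (mean k :=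
    sum_deg_le t (fun a b => c a b * r k ^ (a + b) * (INR m * trig_coef 0 (trig_monomial a b)))).
  assert (Hcircle : forall k, In k (seq 1 p) ->
    Wr (Bset r p m) w (r k) * circle_avg (r k) f = weight_formula r p m k * mean k).
  { intros k Hk. apply in_seq in Hk. rewrite Wr_Bset, (circle_avg_poly t c) by (auto; lia).
    unfold mean. rewrite !sum_deg_le_scal. apply sum_deg_le_ext. intros; ring. }
  (* On each circle the m points see one more Fourier mode than the circle, the mode of frequency m. *)
  assert (Hpoints : forall k, In k (seq 1 p) ->
    rsum (seq 1 m) (fun j => w (bpt r m k j) * f (bpt r m k j)) = weight_formula r p m k * mean k +
    sum_deg_le t (fun a b => c a b * INR m * trig_coef m (trig_monomial a b) *
                               (weight_formula r p m k * ((-1) ^ k * r k ^ (a + b))))).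
  { intros k Hk. apply in_seq in Hk.
    rewrite (rsum_ext _ _ (fun j => weight_formula r p m k * f (bpt r m k j)))
      by (intros j Hj; apply in_seq in Hj; rewrite w_bpt; auto; lia).
    rewrite rsum_scal.
    change (fun j => f (bpt r m k j))
      with (fun j => f (r k * cos (angle m k j), r k * sin (angle m k j))).
    rewrite (rsum_poly_angle t c f (r k) m k Hm Ht Hf).
    unfold mean. rewrite !sum_deg_le_scal, <- sum_deg_le_plus. apply sum_deg_le_ext. intros; ring. }
  (* Its total contribution vanishes: a monomial of degree a + b <= t has a mode of frequency m
     only if a + b = m + 2q, and then q + 2 <= p. *)
  assert (Hmode : forall a b, (a + b <= t)%nat ->
    rsum (seq 1 p) (fun k => c a b * INR m * trig_coef m (trig_monomial a b) *
                               (weight_formula r p m k * ((-1) ^ k * r k ^ (a + b)))) = 0).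
  { intros a b Hab. rewrite rsum_scal.
    destruct (Req_dec (trig_coef m (trig_monomial a b)) 0) as [E|E]; [rewrite E; ring|].
    destruct (trig_coef_nonzero m _ E) as [e [He Em]].
    destruct (freqs_monomial a b e He) as [q Hq]. rewrite Em in Hq. rewrite Hq.
    rewrite alternating_moment_vanishes by lia. ring. }
  rewrite (rsum_ext _ _ _ Hcircle), (rsum_ext _ _ _ Hpoints), rsum_plus, rsum_sum_deg_le.
  rewrite (sum_deg_le_eq0 t _ Hmode). ring.
Qed.

End Weights.

End Configuration.

Lemma binom_1 n : binom n 1 = n.
Proof. induction n as [|[|n] IH]; simpl in *; lia. Qed.

Lemma dZ_plane s : (-1 <= s)%Z -> Z.of_nat (dZ 2 s) = (s + 1)%Z.
Proof.
  intros H. unfold dZ. destruct (Z.ltb_spec s 0).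
  - simpl. lia.
  - replace (2 - 1)%nat with 1%nat by reflexivity. rewrite binom_1. lia.
Qed.

Lemma N_k_plane t k : (4 * k <= t + 5)%nat -> Z.of_nat (N_k 2 t k) = (Z.of_nat t + 5 - 4 * Z.of_nat k)%Z.
Proof.
  intros Hk. unfold N_k. rewrite Nat2Z.inj_add.
  pose proof (Z.div_mod (Z.of_nat t - 1) 2 ltac:(lia)).
  pose proof (Z.mod_pos_bound (Z.of_nat t - 1) 2 ltac:(lia)).
  pose proof (Z.div_mod (Z.of_nat t) 2 ltac:(lia)).
  pose proof (Z.mod_pos_bound (Z.of_nat t) 2 ltac:(lia)).
  rewrite !dZ_plane; lia.
Qed.

Lemma N_npt_plane t p : (4 * p <= t + 5)%nat -> N_npt 2 p t = (p * (t + 3 - 2 * p))%nat.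
Proof.
  intros Hp. apply Nat2Z.inj.
  enough (G : forall q, (q <= p)%nat ->
    Z.of_nat (N_npt 2 q t) = (Z.of_nat q * (Z.of_nat t + 5) - 2 * Z.of_nat q * (Z.of_nat q + 1))%Z).
  { rewrite G by lia. rewrite Nat2Z.inj_mul, Nat2Z.inj_sub by lia. nia. }
  induction q as [|q IH]; intros Hq; [reflexivity|].
  unfold N_npt in *. change (fold_right Nat.add 0%nat ?l) with (list_sum l) in *.
  rewrite seq_S, map_app, list_sum_app, Nat2Z.inj_add, IH by lia. cbn [map list_sum fold_right].
  rewrite Nat.add_0_r, N_k_plane by lia. lia.
Qed.

Theorem mainTheorem2 (t p : nat) (r : nat -> R) :
  (1 <= p)%nat -> (p <= (t + 5) / 4)%nat ->
  (forall k, (1 <= k <= p)%nat -> 0 < r k) ->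
  (forall k l, (1 <= k)%nat -> (k < l)%nat -> (l <= p)%nat -> r k < r l) ->
  let m := (t + 3 - 2 * p)%nat in
  let B := Bset r p m in
  (exists w : pt -> R, forall k j, (1 <= k <= p)%nat -> (1 <= j <= m)%nat ->
       w (bpt r m k j) = weight_formula r p m k) /\
  (forall w : pt -> R,
     (forall k j, (1 <= k <= p)%nat -> (1 <= j <= m)%nat ->
        w (bpt r m k j) = weight_formula r p m k) ->
     (forall x, In x B -> 0 < w x) /\
     (Nat.odd t = true -> antipodal B w) /\
     (forall s, In s (norm_spectrum B) <-> exists k, (1 <= k <= p)%nat /\ s = r k) /\
     tight_design B w t).
Proof.
  intros Hp Hpt Hr Hmon m B.
  assert (H4p : (4 * p <= t + 5)%nat) by (pose proof (Nat.Div0.mul_div_le (t + 5) 4); lia).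
  assert (Hm : (1 <= m)%nat) by (unfold m; lia).
  split; [exists (radial_weight r p m); intros k j Hk _; apply radial_weight_bpt; auto|].
  intros w Hw.
  assert (Hpos : forall x, In x B -> 0 < w x).
  { intros x Hx. apply in_Bset in Hx. destruct Hx as [k [j [Hk [Hj ->]]]].
    rewrite Hw by auto. apply weight_formula_pos; auto. }
  split; [exact Hpos|]. split; [|split; [intros s; apply norm_spectrum_Bset; auto|]].
  - intros Ht. apply Nat.odd_spec in Ht. destruct Ht as [u Hu].
    apply (antipodal_Bset r p m (u + 2 - p) w (weight_formula r p m)); auto; unfold m; lia.
  - split; [split; [split; [|split]|]|].
    + apply NoDup_Bset; auto.
    + intros x Hx. apply in_Bset in Hx. destruct Hx as [k [j [Hk [Hj ->]]]]. apply bpt_nonzero; auto.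
    + exact Hpos.
    + intros f Hf. apply (design_equation_Bset p r Hr Hmon m w Hw t f); auto; unfold m; lia.
    + unfold B. rewrite length_Bset, (Permutation_length (norm_spectrum_Bset_perm p r Hr Hmon m Hm)),
        length_map, length_seq, N_npt_plane by exact H4p. reflexivity.
Qed.
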